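(* Let $(f_n)$ be a sequence of finitary Boolean functions. The following are equivalent: (1) there exists a sequence of integers $r_n\to\infty$ such that for every integer sequence $(m_n)$ with $m_n\ge r_n$ for all $n$, the sequence $(B_{m_n}f_n)_n$ is noise sensitive; (2) $(f_n)$ is noise sensitive.
   Context: Let $\Omega=\{-1,1\}$ and $\Omega^\infty=\{-1,1\}^{\mathbb N}$ with the uniform product probability measure; $\omega$ denotes a uniformly random element. A Boolean function is a measurable map $f:\Omega^\infty\to\Omega$. A set $W\subseteq\mathbb N$ is a witness set for $f$ at $\omega$ if there is an event $A$ with $\mathbb P(A)=1$ such that for all $\tilde\omega\in A$: if $\tilde\omega_i=\omega_i$ for all $i\in W$ then $f(\tilde\omega)=f(\omega)$. $f$ is finitary if almost surely a finite witness set exists; then $W(f)(\omega)$ denotes the least finite witness set in the order: smaller maximum first, then smaller cardinality, then lexicographic. $B_mf=\mathbf 1_{\{W(f)\subseteq[m]\}}f-\mathbf 1_{\{W(f)\not\subseteq[m]\}}$. For $\epsilon\in[0,1]$, $\omega^\epsilon$ is obtained from $\omega$ by, independently for each coordinate, with probability $\epsilon$ replacing $\omega_i$ by a fresh uniform bit. A sequence $(g_n)$ of Boolean functions is noise sensitive if for every $\epsilon\in(0,1]$, $\mathbb E[g_n(\omega)g_n(\omega^\epsilon)]-\mathbb E[g_n(\omega)]^2\to0$. *)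

From HB Require Import structures.
From mathcomp Require Import all_boot all_order all_algebra finmap.
From mathcomp Require Import all_classical all_reals all_analysis.
Set Implicit Arguments. Unset Strict Implicit. Unset Printing Implicit Defensive.
Import Order.TTheory GRing.Theory Num.Theory.
Local Open Scope classical_set_scope.
Local Open Scope ring_scope.

(* Omega = {-1,1} is encoded by bool: true <-> 1, false <-> -1.
   Coordinates are indexed by nat (0,1,2,...), i.e. coordinate i here is
   coordinate i+1 of the paper, and [m] = {0,...,m-1}. *)
Definition sgnb {R : ringType} (b : bool) : R := if b then 1 else -1.

Definition cyl : set (set (nat -> bool)) :=
  [set A | exists i b, A = [set w : nat -> bool | w i = b]].

Definition Cube := g_sigma_algebraType cyl.

(* P is the uniform product probability measure: all coordinates are
   independent uniform bits (this determines P uniquely on the product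
   sigma-algebra). *)
Definition is_uniform_cube {R : realType} (P : probability Cube R) : Prop :=
  forall (s : seq nat) (a : nat -> bool), uniq s ->
    P [set w : Cube | forall i, i \in s -> w i = a i] = ((2^-1) ^+ size s)%:E.

Definition noise_pair_prob {R : realType} (eps : R) (a b : bool) : R :=
  if a == b then (1 - eps / 2) / 2 else eps / 4.

(* Q is the joint law of (omega, omega^eps): independent coordinate pairs,
   omega_i uniform and omega^eps_i = omega_i w.p. 1-eps, else a fresh bit. *)
Definition is_noise_coupling {R : realType} (eps : R)
    (Q : probability (Cube * Cube)%type R) : Prop :=
  forall (s : seq nat) (a b : nat -> bool), uniq s ->
    Q [set xy : Cube * Cube | forall i, i \in s -> xy.1 i = a i /\ xy.2 i = b i]
      = (\prod_(i <- s) noise_pair_prob eps (a i) (b i))%:E.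

Definition boolean_fun (f : Cube -> bool) : Prop := measurable_fun setT f.

Definition witness {R : realType} (P : probability Cube R) (f : Cube -> bool)
    (w : Cube) (W : set nat) : Prop :=
  exists A : set Cube, measurable A /\ P A = 1%E /\
    forall w' : Cube, A w' -> (forall i, W i -> w' i = w i) -> f w' = f w.

Definition finitary {R : realType} (P : probability Cube R) (f : Cube -> bool)
  : Prop :=
  exists A : set Cube, measurable A /\ P A = 1%E /\
    forall w, A w -> exists W : {fset nat}, witness P f w [set i | i \in W].

Definition fmax1 (W : {fset nat}) : nat := \max_(i <- W) i.+1.

Fixpoint lexlt (s t : seq nat) : bool :=
  match s, t with
  | [::], [::] => false
  | [::], _ :: _ => true
  | _ :: _, [::] => false
  | x :: s', y :: t' => (x < y)%N || ((x == y) && lexlt s' t')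
  end.

Definition wset_lt (W1 W2 : {fset nat}) : bool :=
  (fmax1 W1 < fmax1 W2)%N ||
  ((fmax1 W1 == fmax1 W2) &&
   ((#|` W1| < #|` W2|)%N ||
    ((#|` W1| == #|` W2|) && lexlt (sort leq W1) (sort leq W2)))).

Definition wset_le (W1 W2 : {fset nat}) : bool := (W1 == W2) || wset_lt W1 W2.

Definition least_witness {R : realType} (P : probability Cube R)
    (f : Cube -> bool) (w : Cube) (W : {fset nat}) : Prop :=
  witness P f w [set i | i \in W] /\
  forall W' : {fset nat}, witness P f w [set i | i \in W'] -> wset_le W W'.

(* W(f)(w): the least finite witness set (None if no finite witness set) *)
Definition Wf {R : realType} (P : probability Cube R) (f : Cube -> bool)
    (w : Cube) : option {fset nat} :=
  match pselect (exists W, least_witness P f w W) with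
  | left H => Some (projT1 (cid H))
  | right _ => None
  end.

(* B_m f = 1_{W(f) ⊆ [m]} f - 1_{W(f) ⊄ [m]} *)
Definition Bm {R : realType} (P : probability Cube R) (m : nat)
    (f : Cube -> bool) : Cube -> bool :=
  fun w => match Wf P f w with
           | Some W => if `[< forall i, i \in W -> (i < m)%N >] then f w else false
           | None => false
           end.

Definition noise_sensitive {R : realType} (P : probability Cube R)
    (Q : R -> probability (Cube * Cube)%type R) (g : nat -> Cube -> bool) : Prop :=
  forall eps : R, 0 < eps <= 1 ->
    (fun n => Rintegral (Q eps) setT (fun xy => sgnb (g n xy.1) * sgnb (g n xy.2))
              - (Rintegral P setT (fun x => sgnb (g n x))) ^+ 2) @ \oo --> 0.

From HB Require Import structures.
From mathcomp Require Import all_boot all_order all_algebra finmap.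
From mathcomp Require Import all_classical all_reals all_analysis.
From mathcomp Require Import ring lra measurable_realfun.
From mathcomp Require unstable.
Set Implicit Arguments. Unset Strict Implicit. Unset Printing Implicit Defensive.
Import Order.TTheory GRing.Theory Num.Theory.
Local Open Scope classical_set_scope.
Local Open Scope ring_scope.

(* B_m f agrees with f outside the event that f has no witness set inside
   [m]; since f is finitary, the probability d_f(m) of this event tends to 0 as
   m grows.  Both marginals of the noise coupling are uniform, so changing a
   Boolean function on an event E changes E[g(w) g(w^eps)] - E[g]^2 by at most
   8 P(E).  Choosing M_n with d_{f_n}(M_n) <= 1/(n+1), for every m_n >= M_n the
   correlations of B_{m_n} f_n and of f_n differ by at most 8/(n+1), uniformly
   in eps, so one sequence is noise sensitive iff the other is.  Both
   implications follow with m_n = max(r_n, M_n) and r_n = max(M_n, n). *)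

Definition cylinder (s : seq nat) (a : nat -> bool) : set Cube :=
  [set w : Cube | forall i, i \in s -> w i = a i].

Lemma measurable_coord i b : measurable [set w : Cube | w i = b].
Proof. by apply: sub_sigma_algebra; exists i, b. Qed.

Lemma cylinder_nil a : cylinder [::] a = setT.
Proof. by apply/seteqP; split => w // _ i. Qed.

Lemma cylinder_cons i s a :
  cylinder (i :: s) a = [set w : Cube | w i = a i] `&` cylinder s a.
Proof.
apply/seteqP; split => w /=.
  by move=> H; split => [|j js]; apply: H; rewrite inE ?eqxx ?js ?orbT.
by move=> [wi H] j; rewrite inE => /orP[/eqP->|/H].
Qed.

Lemma measurable_cylinder s a : measurable (cylinder s a).
Proof.
elim: s => [|i s IH]; first by rewrite cylinder_nil.
by rewrite cylinder_cons; exact: measurableI (measurable_coord _ _) IH.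
Qed.

Lemma cylinder_undup s a : cylinder (undup s) a = cylinder s a.
Proof. by apply/seteqP; split => w /= H i iS; apply: H; rewrite ?mem_undup in iS *. Qed.

Definition cylinders : set (set Cube) :=
  [set A | A = set0 \/ exists s a, A = cylinder s a].

Lemma setI_closed_cylinders : setI_closed cylinders.
Proof.
move=> A B [->|[s1 [a1 ->]]]; first by left; rewrite set0I.
move=> [->|[s2 [a2 ->]]]; first by left; rewrite setI0.
have [[i [is1 is2 ne]]|consistent] :=
  pselect (exists i, [/\ i \in s1, i \in s2 & a1 i <> a2 i]).
  left; apply/seteqP; split => // w /= [H1 H2].
  by apply: ne; rewrite -(H1 i is1) (H2 i is2).
right; exists (s1 ++ s2), (fun i => if i \in s1 then a1 i else a2 i).
apply/seteqP; split => w /=.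
  move=> [H1 H2] i; rewrite mem_cat.
  by case: ifP => [is1 _|_ /= is2]; [exact: H1|exact: H2].
move=> H; split => i ii; have := H i; rewrite mem_cat ii ?orbT => /(_ isT) //.
case: ifP => // is1 wi; apply: contrapT => ne.
by apply: consistent; exists i; split => //; rewrite -wi.
Qed.

Lemma cylinders_generate : (@measurable _ Cube) = <<s cylinders >>.
Proof.
apply/seteqP; split.
  apply: smallest_sub; first exact: smallest_sigma_algebra.
  move=> A [i [b ->]]; apply: sub_sigma_algebra; right; exists [:: i], (fun _ => b).
  by rewrite cylinder_cons cylinder_nil setIT.
apply: smallest_sub; first exact: sigma_algebra_measurable.
by move=> A [->|[s [a ->]]]; [exact: measurable0|exact: measurable_cylinder].
Qed.

Lemma measure_eq_cylinders (R : realType) (m1 m2 : {measure set Cube -> \bar R}) :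
  (m1 setT < +oo)%E -> (forall s a, m1 (cylinder s a) = m2 (cylinder s a)) ->
  forall A, measurable A -> m1 A = m2 A.
Proof.
move=> m1_fin m12; apply: (measure_unique cylinders (fun _ => setT)).
- exact: cylinders_generate.
- exact: setI_closed_cylinders.
- by move=> _; right; exists [::], xpredT; rewrite cylinder_nil.
- by rewrite bigcup_const.
- by move=> _ [->|[s [a ->]]]; rewrite ?measure0.
- by [].
Qed.

Lemma uniform_cylinder (R : realType) (P : probability Cube R) :
  is_uniform_cube P ->
  forall s a, P (cylinder s a) = ((2^-1) ^+ size (undup s))%:E.
Proof. by move=> HP s a; rewrite -cylinder_undup HP // undup_uniq. Qed.

Section NoiseCylinder.
Variables (R : realType) (eps : R) (mu : {measure set (Cube * Cube) -> \bar R}).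
Hypothesis mu_pairs : forall (s : seq nat) (a b : nat -> bool), uniq s ->
  mu [set xy : Cube * Cube | forall i, i \in s -> xy.1 i = a i /\ xy.2 i = b i]
    = (\prod_(i <- s) noise_pair_prob eps (a i) (b i))%:E.

Lemma noise_pair_prob_sumr a :
  noise_pair_prob eps a true + noise_pair_prob eps a false = 2^-1.
Proof. by case: a; rewrite /noise_pair_prob /=; field. Qed.

Definition noise_cylinder (s t : seq nat) (a b : nat -> bool) : set (Cube * Cube) :=
  [set xy | (forall i, i \in s -> xy.1 i = a i) /\
            (forall i, i \in t -> xy.1 i = a i /\ xy.2 i = b i)].

Lemma measurable_noise_cylinder s t a b : measurable (noise_cylinder s t a b).
Proof.
rewrite (_ : noise_cylinder _ _ _ _ =
  fst @^-1` cylinder (s ++ t) a `&` snd @^-1` cylinder t b).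
  apply: measurableI; rewrite -[X in measurable X]setTI.
    by apply: measurable_fst => //; exact: measurable_cylinder.
  by apply: measurable_snd => //; exact: measurable_cylinder.
apply/seteqP; split => xy /=.
  move=> [H1 H2]; split => i; last by move=> /H2[].
  by rewrite mem_cat => /orP[/H1|/H2[]].
move=> [H1 H2]; split => [i i1|i it]; first by apply: H1; rewrite mem_cat i1.
by split; [apply: H1; rewrite mem_cat it orbT|exact: H2].
Qed.

(* Each first coordinate pinned on [s] is split according to the value of the
   second coordinate, moving it to [t]; the two halves add up by
   [noise_pair_prob_sumr]. *)
Lemma mu_noise_cylinder s t a b : uniq (s ++ t) ->
  mu (noise_cylinder s t a b) =
  ((2^-1) ^+ size s * \prod_(i <- t) noise_pair_prob eps (a i) (b i))%:E.
Proof.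
elim: s t b => [|i s IH] t b.
  rewrite expr0 mul1r => ut; rewrite -mu_pairs //; congr (mu _).
  by apply/seteqP; split => xy /=; [case|split].
rewrite /= => /andP[nist ust].
have ist : uniq (s ++ i :: t).
  have /perm_uniq-> : perm_eq (s ++ i :: t) (i :: s ++ t) by rewrite -cat1s perm_catCA.
  by rewrite /= nist.
pose b_ v j := if j == i then v else b j.
have b_t v : {in t, b_ v =1 b}.
  by move=> j jt; rewrite /b_; case: eqP => // ji; move: nist; rewrite -ji mem_cat jt orbT.
have split_yi : noise_cylinder (i :: s) t a b =
    noise_cylinder s (i :: t) a (b_ true) `|` noise_cylinder s (i :: t) a (b_ false).
  apply/seteqP; split => xy /=.
    move=> [H1 H2]; have pin v : xy.2 i = v -> noise_cylinder s (i :: t) a (b_ v) xy.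
      move=> yi; split => [j js|j]; first by apply: H1; rewrite inE js orbT.
      rewrite inE => /orP[/eqP->|jt]; first by rewrite /b_ eqxx yi H1 ?mem_head.
      by rewrite b_t //; exact: H2.
    by case: (xy.2 i) (pin (xy.2 i) erefl) => ?; [left|right].
  have unpin v : noise_cylinder s (i :: t) a (b_ v) xy -> noise_cylinder (i :: s) t a b xy.
    move=> [H1 H2]; split => [j|j jt].
      by rewrite inE => /orP[/eqP->|/H1//]; case: (H2 i (mem_head _ _)).
    by rewrite -(b_t v) //; apply: H2; rewrite inE jt orbT.
  by case; exact: unpin.
have muU A B : measurable A -> measurable B -> A `&` B = set0 ->
    mu (A `|` B) = (mu A + mu B)%E by exact: measureU.
rewrite split_yi muU; try exact: measurable_noise_cylinder.
  rewrite !IH // -EFinD !big_cons /b_ eqxx.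
  rewrite !(eq_big_seq _ (fun j jt => congr1 _ (b_t _ j jt))).
  by congr (_%:E); rewrite exprS -(noise_pair_prob_sumr (a i)); ring.
apply/seteqP; split => // xy /= [[_ H1] [_ H2]].
by have [_ +] := H1 i (mem_head _ _); have [_ ->] := H2 i (mem_head _ _); rewrite /b_ eqxx.
Qed.

Variable P : probability Cube R.
Hypothesis HP : is_uniform_cube P.

Lemma noise_measure_fst A : measurable A -> mu (fst @^-1` A) = P A.
Proof.
apply: (@measure_eq_cylinders R (pushforward mu fst) P) => [|s a].
  change (mu (fst @^-1` setT) < +oo)%E.
  rewrite (_ : fst @^-1` _ = noise_cylinder [::] [::] xpredT xpredT).
    by rewrite mu_noise_cylinder // big_nil mulr1 ltry.
  by apply/seteqP; split.
change (mu (fst @^-1` cylinder s a) = P (cylinder s a)); rewrite uniform_cylinder //.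
rewrite (_ : fst @^-1` _ = noise_cylinder (undup s) [::] a a).
  by rewrite mu_noise_cylinder ?cats0 ?undup_uniq // big_nil mulr1.
by rewrite -cylinder_undup; apply/seteqP; split => xy //= [].
Qed.
End NoiseCylinder.

Lemma noise_coupling_swap (R : realType) (eps : R)
    (Qe : probability (Cube * Cube)%type R) :
  is_noise_coupling eps Qe -> forall s a b, uniq s ->
  pushforward Qe unstable.swap
    [set xy : Cube * Cube | forall i, i \in s -> xy.1 i = a i /\ xy.2 i = b i]
    = (\prod_(i <- s) noise_pair_prob eps (a i) (b i))%:E.
Proof.
move=> HQe s a b us; rewrite /pushforward.
rewrite (_ : unstable.swap @^-1` _ =
    [set xy : Cube * Cube | forall i, i \in s -> xy.1 i = b i /\ xy.2 i = a i]).
  rewrite HQe //; congr (_%:E); apply: eq_bigr => i _.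
  by rewrite /noise_pair_prob eq_sym.
by apply/seteqP; split => xy /= H i /H [].
Qed.

Lemma noise_coupling_marginals (R : realType) (P : probability Cube R) (eps : R)
    (Qe : probability (Cube * Cube)%type R) :
  is_uniform_cube P -> is_noise_coupling eps Qe -> forall A, measurable A ->
  Qe (fst @^-1` A) = P A /\ Qe (snd @^-1` A) = P A.
Proof.
move=> HP HQe A mA; split; first exact: (noise_measure_fst (mu := Qe) HQe HP mA).
apply: (@noise_measure_fst R eps (pushforward Qe unstable.swap) _ P HP A mA).
  exact: measurable_swap.
by move=> ?; exact: noise_coupling_swap.
Qed.

Section BoundedIntegrals.
Context {d : measure_display} {T : measurableType d} {R : realType}
  (mu : probability T R).

Lemma integrable_bounded1 (F : T -> R) : measurable_fun setT F ->
  (forall x, `|F x| <= 1) -> mu.-integrable setT (EFin \o F).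
Proof.
move=> mF F1; apply: (@le_integrable _ _ _ mu setT measurableT _ (EFin \o cst 1)).
- exact/measurable_EFinP.
- by move=> x _ /=; rewrite lee_fin normr1 F1.
- exact: finite_measure_integrable_cst.
Qed.

Lemma norm_Rintegral_le1 (F : T -> R) : measurable_fun setT F ->
  (forall x, `|F x| <= 1) -> `|Rintegral mu setT F| <= 1.
Proof.
move=> mF F1; apply: le_trans (le_normr_Rintegral _ _) _ => //.
  exact: integrable_bounded1.
apply: le_trans (@le_Rintegral _ _ _ mu setT _ (cst 1) _ _ _ _) _ => //.
- by apply: integrable_norm; exact: integrable_bounded1.
- exact: finite_measure_integrable_cst.
- rewrite Rintegral_cst //.
  have -> : fine (mu setT) = 1 by rewrite probability_setT.
  by rewrite mul1r.
Qed.
Lemma Rintegral_indic E : measurable E -> Rintegral mu setT (\1_E) = fine (mu E).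
Proof. by move=> mE; rewrite /Rintegral integral_indic // setIT. Qed.

Lemma norm_Rintegral_diff_le (F G : T -> R) (E : set T) :
  measurable_fun setT F -> measurable_fun setT G ->
  (forall x, `|F x| <= 1) -> (forall x, `|G x| <= 1) ->
  measurable E -> (forall x, ~ E x -> F x = G x) ->
  `|Rintegral mu setT F - Rintegral mu setT G| <= 2 * fine (mu E).
Proof.
move=> mF mG F1 G1 mE FG.
have iF : mu.-integrable setT (EFin \o F) by exact: integrable_bounded1.
have iG : mu.-integrable setT (EFin \o G) by exact: integrable_bounded1.
have iFG : mu.-integrable setT (EFin \o (F \- G)) by exact: (integrableB measurableT iF iG).
have iE : mu.-integrable setT (EFin \o (fun x => 2 * \1_E x : R)).
  have i1 : mu.-integrable setT (EFin \o (\1_E : T -> R)) by exact: integrable_indic.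
  exact: (integrableZl measurableT 2 i1).
have FG_indic x : `|F x - G x| <= 2 * \1_E x.
  rewrite indicE; have [Ex|nEx] := pselect (E x).
    rewrite mem_set // mulr1; apply: le_trans (ler_normB _ _) _.
    by have := F1 x; have := G1 x; lra.
  by rewrite memNset // mulr0 FG // subrr normr0.
rewrite -RintegralB //; apply: (le_trans (le_normr_Rintegral _ _)) => //.
apply: (le_trans (@le_Rintegral _ _ _ mu setT _ (fun x => 2 * \1_E x) _ _ _ _)) => //.
- exact: integrable_norm.
- by rewrite RintegralZl ?Rintegral_indic //; exact: integrable_indic.
Qed.
End BoundedIntegrals.

Lemma measurable_sgnb (R : realType) : measurable_fun setT (sgnb : bool -> R).
Proof. by []. Qed.

Lemma normr_sgnb (R : realType) (b : bool) : `|sgnb b : R| = 1.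
Proof. by case: b; rewrite /sgnb ?normrN normr1. Qed.

Lemma measurable_sgnb_comp (R : realType) (g : Cube -> bool) :
  measurable_fun setT g -> measurable_fun setT (fun x => sgnb (g x) : R).
Proof. by move=> mg; exact: measurableT_comp (@measurable_sgnb R) mg. Qed.

Lemma measurable_sgnb_pair (R : realType) (g : Cube -> bool) :
  measurable_fun setT g ->
  measurable_fun setT (fun xy : Cube * Cube => sgnb (g xy.1) * sgnb (g xy.2) : R).
Proof.
move=> mg; apply: measurable_funM.
  exact: measurableT_comp (@measurable_sgnb_comp R _ mg) measurable_fst.
exact: measurableT_comp (@measurable_sgnb_comp R _ mg) measurable_snd.
Qed.

Lemma norm_sub_sqr_le (R : realDomainType) (X Y a b : R) :
  `|a| <= 1 -> `|b| <= 1 ->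
  `|X - a ^+ 2 - (Y - b ^+ 2)| <= `|X - Y| + 2 * `|a - b|.
Proof.
move=> a1 b1; have -> : X - a ^+ 2 - (Y - b ^+ 2) = (X - Y) - (a - b) * (a + b) by ring.
apply: le_trans (ler_normB _ _) _; rewrite lerD2l normrM mulrC ler_wpM2r //.
by apply: le_trans (ler_normD _ _) _; lra.
Qed.

Definition correlation (R : realType) (P : probability Cube R)
    (Qe : probability (Cube * Cube)%type R) (g : Cube -> bool) : R :=
  Rintegral Qe setT (fun xy => sgnb (g xy.1) * sgnb (g xy.2))
  - (Rintegral P setT (fun x => sgnb (g x))) ^+ 2.

Section Correlation.
Variables (R : realType) (P : probability Cube R) (eps : R)
  (Qe : probability (Cube * Cube)%type R).
Hypotheses (HP : is_uniform_cube P) (HQe : is_noise_coupling eps Qe).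

Lemma noise_coupling_either_le (E : set Cube) : measurable E ->
  fine (Qe (fst @^-1` E `|` snd @^-1` E)) <= 2 * fine (P E).
Proof.
move=> mE; have [Q1 Q2] := noise_coupling_marginals HP HQe mE.
have mE1 : measurable (fst @^-1` E : set (Cube * Cube)).
  by rewrite -[X in measurable X]setTI; exact: measurable_fst.
have mE2 : measurable (snd @^-1` E : set (Cube * Cube)).
  by rewrite -[X in measurable X]setTI; exact: measurable_snd.
have mE12 : measurable (fst @^-1` E `|` snd @^-1` E) by exact: measurableU.
rewrite mulr_natl mulr2n -{1}Q1 -Q2 -fineD ?fin_num_measure //.
by apply: fine_le; rewrite ?fin_numD ?fin_num_measure //; exact: measureU2.
Qed.

Lemma correlation_diff_le (g h : Cube -> bool) (E : set Cube) :
  measurable_fun setT g -> measurable_fun setT h -> measurable E ->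
  (forall x, ~ E x -> g x = h x) ->
  `|correlation P Qe g - correlation P Qe h| <= 8 * fine (P E).
Proof.
move=> mg mh mE gh.
have mE12 : measurable (fst @^-1` E `|` snd @^-1` E : set (Cube * Cube)).
  by apply: measurableU; rewrite -[X in measurable X]setTI;
    [exact: measurable_fst|exact: measurable_snd].
have sgnb_le1 (k : Cube -> bool) : measurable_fun setT k ->
    `|Rintegral P setT (fun x => sgnb (k x))| <= 1.
  move=> mk; apply: norm_Rintegral_le1 (@measurable_sgnb_comp R _ mk) _ => x.
  by rewrite normr_sgnb.
apply: le_trans (norm_sub_sqr_le _ _ (sgnb_le1 g mg) (sgnb_le1 h mh)) _.
have -> : 8 * fine (P E) = 2 * (2 * fine (P E)) + 2 * (2 * fine (P E)) by ring.
apply: lerD; last rewrite ler_pM2l //.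
  apply: le_trans (norm_Rintegral_diff_le Qe (@measurable_sgnb_pair R _ mg)
    (@measurable_sgnb_pair R _ mh) _ _ mE12 _) _.
  - by move=> xy; rewrite normrM !normr_sgnb mulr1.
  - by move=> xy; rewrite normrM !normr_sgnb mulr1.
  - by move=> [x y] /= /not_orP[Ex Ey]; rewrite !gh.
  - by rewrite ler_pM2l //; exact: noise_coupling_either_le.
apply: norm_Rintegral_diff_le
  (@measurable_sgnb_comp R _ mg) (@measurable_sgnb_comp R _ mh) _ _ mE _.
- by move=> x; rewrite normr_sgnb.
- by move=> x; rewrite normr_sgnb.
- by move=> x /gh ->.
Qed.
End Correlation.

Lemma lexlt_trans s t u : lexlt s t -> lexlt t u -> lexlt s u.
Proof.
elim: s t u => [|x s IH] [|y t] [|z u] //=.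
move=> /orP[h1|/andP[/eqP e1 l1]] /orP[h2|/andP[/eqP e2 l2]].
- by rewrite (ltn_trans h1 h2).
- by rewrite -e2 h1.
- by rewrite e1 h2.
- by rewrite e1 e2 eqxx (IH _ _ l1 l2) orbT.
Qed.

Lemma lexlt_total s t : s <> t -> lexlt s t || lexlt t s.
Proof.
elim: s t => [|x s IH] [|y t] //= ne.
case: (ltngtP x y) => //= e; subst y.
by apply: IH => e; apply: ne; rewrite e.
Qed.

Lemma fmax1_leqP (W : {fset nat}) m :
  reflect (forall i, i \in W -> (i < m)%N) (fmax1 W <= m)%N.
Proof.
apply: (iffP idP) => [h i iW|h].
  exact: leq_trans (@leq_bigmax_seq _ _ xpredT (fun j => j.+1) i iW isT) h.
by apply/bigmax_leqP_seq => i iW _; exact: h.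
Qed.

Lemma wset_lt_trans W1 W2 W3 : wset_lt W1 W2 -> wset_lt W2 W3 -> wset_lt W1 W3.
Proof.
rewrite /wset_lt.
move=> /orP[h1|/andP[/eqP e1 /orP[h1|/andP[/eqP f1 l1]]]]
       /orP[h2|/andP[/eqP e2 /orP[h2|/andP[/eqP f2 l2]]]].
- by rewrite (ltn_trans h1 h2).
- by rewrite -e2 h1.
- by rewrite -e2 h1.
- by rewrite e1 h2.
- by rewrite e1 e2 eqxx (ltn_trans h1 h2) orbT.
- by rewrite e1 e2 eqxx -f2 h1 orbT.
- by rewrite e1 h2.
- by rewrite e1 e2 eqxx f1 h2 orbT.
- by rewrite e1 e2 f1 f2 !eqxx (lexlt_trans l1 l2) !orbT.
Qed.

Lemma wset_le_trans W1 W2 W3 : wset_le W1 W2 -> wset_le W2 W3 -> wset_le W1 W3.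
Proof.
rewrite /wset_le => /orP[/eqP->//|h1] /orP[/eqP<-|h2]; first by rewrite h1 orbT.
by rewrite (wset_lt_trans h1 h2) orbT.
Qed.

Lemma wset_le_total W1 W2 : wset_le W1 W2 || wset_le W2 W1.
Proof.
rewrite /wset_le /wset_lt; case: (eqVneq W1 W2) => [->|ne]; first by rewrite eqxx.
rewrite /=.
have [_|_|_] := ltngtP (fmax1 W1) (fmax1 W2); rewrite /= ?orbT //.
have [_|_|_] := ltngtP #|` W1| #|` W2|; rewrite /= ?orbT //.
apply: lexlt_total => e; move/eqP: ne; apply.
by apply/fsetP => i; rewrite -(mem_sort leq W1) e mem_sort.
Qed.

Lemma wset_le_fmax1 W W' : wset_le W W' -> (fmax1 W <= fmax1 W')%N.
Proof.
by rewrite /wset_le /wset_lt => /orP[/eqP->//|/orP[/ltnW//|/andP[/eqP->//]]].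
Qed.

Lemma seq_wset_min (s : seq {fset nat}) : s != [::] ->
  exists2 W, W \in s & forall W', W' \in s -> wset_le W W'.
Proof.
elim: s => [//|W s IH] _; have [-> {IH}|/IH[V Vs hV]] := eqVneq s [::].
  by exists W; rewrite ?mem_head // => W'; rewrite inE => /eqP->; rewrite /wset_le eqxx.
have [WV|VW] := orP (wset_le_total W V).
  exists W; first exact: mem_head.
  move=> W'; rewrite inE => /orP[/eqP->|/hV]; first by rewrite /wset_le eqxx.
  exact: wset_le_trans.
exists V; first by rewrite inE Vs orbT.
by move=> W'; rewrite inE => /orP[/eqP->//|/hV].
Qed.

Lemma exists_wset_least (p : {fset nat} -> Prop) W0 : p W0 ->
  exists W, p W /\ forall W', p W' -> wset_le W W'.
Proof.
move=> pW0; pose A : {fset nat} := [fset i | i in iota 0 (fmax1 W0)]%fset.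
have subA W : (W `<=` A)%fset = (fmax1 W <= fmax1 W0)%N.
  apply/fsubsetP/fmax1_leqP => h i /h; by rewrite in_fset /= mem_iota add0n.
pose L := [seq W <- (fpowerset A : seq _) | `[< p W >]].
have inL W : W \in L = (fmax1 W <= fmax1 W0)%N && `[< p W >].
  by rewrite mem_filter fpowersetE andbC subA.
have W0L : W0 \in L by rewrite inL leqnn; apply/asboolP.
have [|W] := @seq_wset_min L; first by apply: contraTneq W0L => ->.
rewrite inL => /andP[WW0 /asboolP pW] hW; exists W; split => // W' pW'.
have [W'W0|W0W'] := leqP (fmax1 W') (fmax1 W0).
  by apply: hW; rewrite inL W'W0; exact/asboolP.
by rewrite /wset_le /wset_lt (leq_ltn_trans WW0 W0W') orbT.
Qed.

Lemma measurable_prefix_determined m (D : set Cube) :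
  (forall w w' : Cube, (forall i, (i < m)%N -> w i = w' i) -> D w -> D w') ->
  measurable D.
Proof.
elim: m D => [|m IH] D hD.
  have [[w Dw]|nD] := pselect (exists w, D w).
    by rewrite (_ : D = setT) //; apply/seteqP; split => // w' _; exact: hD Dw.
  by rewrite (_ : D = set0) //; apply/seteqP; split => // w Dw; apply: nD; exists w.
pose set_m (w : Cube) b : Cube := fun j => if j == m then b else w j.
pose D_ b := [set w : Cube | D (set_m w b)].
have mD_ b : measurable (D_ b).
  apply: IH => w w' ww'; apply: hD => i ltim; rewrite /set_m.
  by case: eqP => // /eqP neim; apply: ww'; rewrite ltn_neqAle neim -ltnS.
have set_mK (w : Cube) : set_m w (w m) = w.
  by apply/funext => i; rewrite /set_m; case: eqP => // ->.
rewrite (_ : D = [set w : Cube | w m = true] `&` D_ true `|`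
                 [set w : Cube | w m = false] `&` D_ false).
  by apply: measurableU; apply: measurableI => //; exact: measurable_coord.
apply/seteqP; split => w /=.
  by case wm: (w m) => Dw; [left|right]; rewrite /D_ /= -wm set_mK.
by move=> [[wm Dw]|[wm Dw]]; rewrite -(set_mK w) wm.
Qed.

Section Witness.
Variables (R : realType) (P : probability Cube R) (f : Cube -> bool).
Hypothesis mf : measurable_fun setT f.

Lemma measurable_fun_neq v : measurable [set w : Cube | f w != v].
Proof.
rewrite (_ : [set w | f w != v] = setT `&` f @^-1` [set ~~ v]); first exact: mf.
by apply/seteqP; split => w /=; case: (f w); case: v => //= -[].
Qed.

Lemma witnessE (W : {fset nat}) w : witness P f w [set i | i \in W] <->
  P (cylinder W w `&` [set w' | f w' != f w]) = 0%E.
Proof.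
have mC : measurable (cylinder W w `&` [set w' | f w' != f w]).
  by apply: measurableI; [exact: measurable_cylinder|exact: measurable_fun_neq].
split=> [[A [mA [PA fA]]]|P0].
  apply: (@subset_measure0 _ _ _ P _ (~` A)) => //; first exact: measurableC.
    by move=> w' [Cw' /negP fw'] Aw'; apply/fw'/eqP; exact: fA.
  by change (P (~` A) = 0%E); rewrite probability_setC // PA subee.
exists (~` (cylinder W w `&` [set w' | f w' != f w])); split; first exact: measurableC.
split; first by rewrite probability_setC // P0 sube0.
by move=> w' nC agree; apply: contrapT => /eqP fw'; apply: nC.
Qed.

Definition witnessed m : set Cube := [set w | exists W : {fset nat},
  (forall i, i \in W -> (i < m)%N) /\ witness P f w [set i | i \in W]].

(* [witnessed m] depends on [f w], so it is not determined by the first [m]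
   coordinates; once the value of [f w] is fixed, it is. *)
Lemma measurable_witnessed m : measurable (witnessed m).
Proof.
pose null_off v := [set w : Cube | exists W : {fset nat},
  (forall i, i \in W -> (i < m)%N) /\ P (cylinder W w `&` [set w' | f w' != v]) = 0%E].
have m_null_off v : measurable (null_off v).
  apply: (@measurable_prefix_determined m) => w w' ww' [W [Wm PW]].
  exists W; split => //; rewrite (_ : cylinder W w' = cylinder W w) //.
  by apply/seteqP; split => x /= xw i iW; rewrite xw // ww' //; exact: Wm.
rewrite (_ : witnessed m = [set w | f w != false] `&` null_off true `|`
                           [set w | f w != true] `&` null_off false).
  by apply: measurableU; apply: measurableI => //; exact: measurable_fun_neq.
apply/seteqP; split => w /=.
  by move=> [W [Wm /witnessE PW]]; case fw: (f w); [left|right]; split => //;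
    exists W; rewrite -fw.
by move=> [] [fw [W [Wm PW]]]; exists W; split => //; apply/witnessE;
  move: fw; case: (f w).
Qed.

(* Since [wset_le] compares maxima first, the least witness set lies in [[m]]
   as soon as some witness set does. *)
Lemma BmE m w : Bm P m f w = f w && `[< witnessed m w >].
Proof.
rewrite /Bm /Wf; case: pselect => [H|noleast].
  case: (cid H) => W /= [Ww Wleast]; case: asboolP => Wm.
    by rewrite asboolT ?andbT //; exists W.
  rewrite asboolF ?andbF // => -[W' [W'm W'w]]; apply: Wm.
  apply/fmax1_leqP; apply: leq_trans (wset_le_fmax1 (Wleast _ W'w)) _.
  exact/fmax1_leqP.
rewrite asboolF ?andbF // => -[W0 [_ W0w]].
have [W [Ww Wleast]] := @exists_wset_least (fun W => witness P f w [set i | i \in W]) W0 W0w.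
by apply: noleast; exists W.
Qed.

Lemma measurable_Bm m : measurable_fun setT (Bm P m f).
Proof.
rewrite (_ : Bm P m f = fun w => f w && `[< witnessed m w >]); last first.
  by apply/funext => w; exact: BmE.
apply: measurable_and => //; apply: (measurable_fun_bool true).
rewrite (_ : _ `&` _ = witnessed m); first exact: measurable_witnessed.
by apply/seteqP; split => w /=; [move=> [_ /asboolP]|move=> ?; split=> //; exact/asboolP].
Qed.

Lemma not_witnessed_small : finitary P f -> forall e : R, 0 < e ->
  exists N, forall m, (N <= m)%N -> fine (P (~` witnessed m)) <= e.
Proof.
move=> [A [mA [PA Awit]]] e e0.
have mW m : measurable (witnessed m) := measurable_witnessed m.
have Wnd : {homo witnessed : m n / (m <= n)%N >-> (m <= n)%O}.
  move=> m n mn; apply/subsetPset => w [W [Wm Ww]]; exists W; split => // i iW.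
  exact: leq_trans (Wm i iW) mn.
have mU : measurable (\bigcup_m witnessed m) by exact: bigcupT_measurable.
have PU : P (\bigcup_m witnessed m) = 1%E.
  apply/eqP; rewrite eq_le probability_le1 //= -PA.
  apply: le_measure; rewrite ?inE //.
  move=> w /Awit[W Ww]; exists (fmax1 W) => //; exists W; split => //.
  exact/fmax1_leqP.
have : (fine \o (fun m => P (witnessed m))) @ \oo --> (1 : R^o).
  by apply: fine_cvg; rewrite -PU; exact: nondecreasing_cvg_mu mW mU Wnd.
move/cvgrPdist_lt => /(_ e e0) [N _ hN]; exists N => m Nm.
rewrite probability_setC // -(fineK (fin_num_measure _ _ (mW m))) -EFinB /=.
by apply: ltW; apply: le_lt_trans (hN m Nm); exact: ler_norm.
Qed.
End Witness.

Lemma correlation_Bm_le (R : realType) (P : probability Cube R) (eps : R)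
    (Qe : probability (Cube * Cube)%type R) (f : Cube -> bool) m :
  is_uniform_cube P -> is_noise_coupling eps Qe -> measurable_fun setT f ->
  `|correlation P Qe (Bm P m f) - correlation P Qe f|
    <= 8 * fine (P (~` witnessed P f m)).
Proof.
move=> HP HQe mf; apply: correlation_diff_le HP HQe _ _ _ _ _ _ _ => //.
- exact: measurable_Bm.
- by apply: measurableC; exact: measurable_witnessed.
- by move=> w /contrapT Ww; rewrite BmE // asboolT ?andbT.
Qed.

Lemma cvg0_of_close (R : realType) (u v w : nat -> R) :
  u @ \oo --> 0 -> w @ \oo --> 0 -> (forall n, `|v n - u n| <= w n) ->
  v @ \oo --> 0.
Proof.
move=> u0 w0 vu.
have vu0 : (fun n => v n - u n) @ \oo --> 0.
  apply: (@squeeze_cvgr _ _ _ _ (fun n => - w n) w) => //.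
  - by near=> n; rewrite -ler_norml; exact: vu.
  - by rewrite -oppr0; exact: cvgN.
rewrite (_ : v = fun n => v n - u n + u n); last by apply/funext => n; rewrite subrK.
by rewrite -(addr0 0); exact: cvgD.
Unshelve. all: by end_near.
Qed.

Lemma cvg_scaled_harmonic (R : realType) (c : R) :
  (fun n : nat => c * (n.+1%:R)^-1) @ \oo --> 0.
Proof. by rewrite -(mulr0 c); apply: cvgMr; exact: cvg_harmonic. Qed.

Section NoiseSensitivityBm.
Variables (R : realType) (P : probability Cube R)
  (Q : R -> probability (Cube * Cube)%type R) (f : nat -> Cube -> bool).
Hypotheses (HP : is_uniform_cube P)
  (HQ : forall eps : R, 0 <= eps <= 1 -> is_noise_coupling eps (Q eps))
  (mf : forall n, measurable_fun setT (f n)).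

Lemma exists_witness_threshold : (forall n, finitary P (f n)) ->
  exists M : nat -> nat, forall n m, (M n <= m)%N ->
    fine (P (~` witnessed P (f n) m)) <= (n.+1%:R)^-1.
Proof.
move=> Hfin; have /choice[M hM] : forall n, exists N, forall m, (N <= m)%N ->
    fine (P (~` witnessed P (f n) m)) <= (n.+1%:R)^-1.
  by move=> n; apply: not_witnessed_small => //; rewrite invr_gt0 ltr0Sn.
by exists M.
Qed.

Variable M : nat -> nat.
Hypothesis hM : forall n m, (M n <= m)%N ->
  fine (P (~` witnessed P (f n) m)) <= (n.+1%:R)^-1.

Lemma noise_sensitive_Bm (m : nat -> nat) : (forall n, (M n <= m n)%N) ->
  noise_sensitive P Q (fun n => Bm P (m n) (f n)) <-> noise_sensitive P Q f.
Proof.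
move=> Mm; have close eps : 0 < eps <= 1 -> forall n,
    `|correlation P (Q eps) (Bm P (m n) (f n)) - correlation P (Q eps) (f n)|
    <= 8 * (n.+1%:R)^-1.
  move=> /andP[e0 e1] n.
  have HQe : is_noise_coupling eps (Q eps) by apply: HQ; rewrite ltW.
  apply: le_trans (correlation_Bm_le _ HP HQe (mf n)) _.
  by rewrite ler_pM2l //; exact: hM.
split=> NS eps epsI.
  apply: cvg0_of_close (NS eps epsI) (cvg_scaled_harmonic 8) _ => n.
  by rewrite distrC; exact: close.
exact: cvg0_of_close (NS eps epsI) (cvg_scaled_harmonic 8) (close eps epsI).
Qed.
End NoiseSensitivityBm.

Theorem mainTheorem9 (R : realType) (P : probability Cube R)
  (HP : is_uniform_cube P)
  (Q : R -> probability (Cube * Cube)%type R)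
  (HQ : forall eps : R, 0 <= eps <= 1 -> is_noise_coupling eps (Q eps))
  (f : nat -> Cube -> bool)
  (Hbool : forall n, boolean_fun (f n))
  (Hfin : forall n, finitary P (f n)) :
  (exists r : nat -> nat, r @ \oo --> \oo /\
     forall m : nat -> nat, (forall n, (r n <= m n)%N) ->
       noise_sensitive P Q (fun n => Bm P (m n) (f n)))
  <-> noise_sensitive P Q f.
Proof.
have [M hM] := exists_witness_threshold Hbool Hfin.
have NS_Bm := noise_sensitive_Bm HP HQ Hbool hM.
split=> [[r [_ hr]]|NS].
  apply/(NS_Bm (fun n => maxn (r n) (M n))) => [n|]; first exact: leq_maxr.
  by apply: hr => n; exact: leq_maxl.
exists (fun n => maxn (M n) n); split.
  by apply/cvgnyPge => A; exists A => // n /= An; exact: leq_trans An (leq_maxr _ _).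
by move=> m rm; apply/NS_Bm => // n; exact: leq_trans (leq_maxl _ _) (rm n).
Qed.
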